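(* Let $\epsilon$ be a real number with $0 < \epsilon \leq 1$ and let $t$ be an integer such that every finite simple graph $G$ with $\Delta_\epsilon(G) \geq t$ satisfies $\chi(G) \leq \max\{\omega(G), \Delta_\epsilon(G)\}$. Then $t \geq 1 + \frac{2}{\epsilon}$.
   Context: For a graph $G$, $d(v)$ is the degree of $v$, $\chi(G)$ the chromatic number and $\omega(G)$ the clique number. For $0 \leq \epsilon \leq 1$, \[\Delta_\epsilon(G) = \left\lfloor \max_{xy \in E(G)} \Big( (1-\epsilon)\min\{d(x), d(y)\} + \epsilon \max\{d(x), d(y)\} \Big) \right\rfloor.\] *)

From HB Require Import structures.
From mathcomp Require Import all_boot all_order all_algebra.
From mathcomp Require Import reals.
Set Implicit Arguments. Unset Strict Implicit. Unset Printing Implicit Defensive.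
Import Order.TTheory GRing.Theory Num.Theory.

Section Graphs.
Variable T : finType.
Variable e : rel T.

Definition deg (v : T) : nat := #|[set y | e v y]|.

Definition colorable (k : nat) : bool :=
  [exists f : {ffun T -> 'I_k}, [forall x, forall y, e x y ==> (f x != f y)]].

(* chromatic number: least k such that G is k-colourable
   (#|T| colours always suffice, so #|T| is a valid default) *)
Definition chi : nat := \big[minn/#|T|]_(k < #|T|.+1 | colorable k) k.

Definition is_clique (A : {set T}) : bool :=
  [forall x in A, forall y in A, (x != y) ==> e x y].

Definition omega : nat := \max_(A : {set T} | is_clique A) #|A|.

Local Open Scope ring_scope.

Definition edge_val (R : realType) (eps : R) (x y : T) : R :=
  (1 - eps) * (minn (deg x) (deg y))%:R + eps * (maxn (deg x) (deg y))%:R.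

(* Delta_eps(G); convention: 0 if G has no edges *)
Definition Delta_eps (R : realType) (eps : R) : int :=
  Num.floor (\big[Num.max/0]_(x : T) \big[Num.max/0]_(y : T | e x y) edge_val eps x y).

End Graphs.

From HB Require Import structures.
From mathcomp Require Import all_boot all_order all_algebra.
From mathcomp Require Import reals.
From mathcomp Require Import zify lra.
Import Order.TTheory GRing.Theory Num.Theory.

Set Implicit Arguments.
Unset Strict Implicit.
Unset Printing Implicit Defensive.

(* The bound is witnessed by one graph for each n: two non-adjacent hubs,
   a clique K of size n+1 joined to both hubs, and a clique A of size n+2
   whose vertices are split between the hubs, each vertex of A seeing exactly
   one hub, about half of A on each side.  Then omega = n+2 while chi > n+2,
   every edge has an endpoint of degree n+2 and every degree is at most
   n+2 + (n+1)/2, so Delta_eps = n+2 whenever eps (n+1)/2 < 1, which holds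
   as soon as n+2 < 1 + 2/eps.  An integer t below 1 + 2/eps is at most such
   an n+2, and the graph then violates chi <= max(omega, Delta_eps). *)

Lemma sum_ord_neq m (j : 'I_m) : \sum_(i : 'I_m | j != i) 1 = m.-1.
Proof.
rewrite sum1dep_card -[m in m.-1]card_ord -(cardsC1 j).
by apply: eq_card => i; rewrite !inE eq_sym.
Qed.

Lemma sum_ord_cut m k b : k <= m ->
  \sum_(i < m | (i < k) == b) 1 = if b then k else m - k.
Proof.
move=> km; have lt_k : \sum_(i < m | i < k) 1 = k.
  by rewrite -(big_ord_widen _ (fun _ => 1) km) sum1_card card_ord.
case: b; first by rewrite -[RHS]lt_k; apply: eq_bigl => i; rewrite eqb_id.
have : \sum_(i < m) 1 = m by rewrite sum1_card card_ord.
rewrite (bigID (fun i : 'I_m => i < k)) /= lt_k.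
rewrite (eq_bigl (fun i : 'I_m => (i < k) == false)) => [|i]; first by lia.
by rewrite eqbF_neg.
Qed.

Section GraphParameters.
Variables (T : finType) (e : rel T).

Lemma deg_sum1 x : deg e x = \sum_(y | e x y) 1.
Proof. by rewrite /deg sum1dep_card. Qed.

Lemma is_cliqueP (A : {set T}) :
  reflect {in A &, forall x y, x != y -> e x y} (is_clique e A).
Proof.
apply: (iffP forall_inP) => [cl x y xA yA | cl x xA].
  by move/forall_inP/(_ y yA)/implyP: (cl x xA).
by apply/forall_inP => y yA; apply/implyP; apply: cl.
Qed.

Lemma clique_injective (U : eqType) (f : T -> U) (A : {set T}) :
  is_clique e A -> {in A &, forall x y, e x y -> f x != f y} ->
  {in A &, injective f}.
Proof.
move=> /is_cliqueP cl proper_f x y xA yA fxy; apply/eqP/negPn/negP => nxy.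
by move: (proper_f x y xA yA (cl x y xA yA nxy)); rewrite fxy eqxx.
Qed.

Lemma card_clique_le m (f : T -> 'I_m) (A : {set T}) :
  is_clique e A -> {in A &, forall x y, e x y -> f x != f y} -> #|A| <= m.
Proof.
move=> cl proper_f; rewrite -(card_in_imset (clique_injective cl proper_f)).
by rewrite -[X in _ <= X]card_ord max_card.
Qed.

Lemma coloring_onto_clique k (f : T -> 'I_k) (A : {set T}) :
  (forall x y, e x y -> f x != f y) -> is_clique e A -> k <= #|A| ->
  forall c, exists2 x, x \in A & f x = c.
Proof.
move=> proper_f cl kA c.
have injf : {in A &, injective f}.
  by apply: clique_injective cl _ => x y _ _; apply: proper_f.
have /eqP fA : f @: A == [set: 'I_k].
  by rewrite eqEcard subsetT cardsT card_ord (card_in_imset injf).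
have : c \in f @: A by rewrite fA inE.
by case/imsetP => x xA ->; exists x.
Qed.

Lemma colorable_proper k :
  colorable e k -> exists f : T -> 'I_k, forall x y, e x y -> f x != f y.
Proof.
case/existsP => f /forallP proper_f; exists f => x y.
by move/forallP/(_ y)/implyP: (proper_f x).
Qed.

Lemma chi_gt m : m < #|T| -> (forall k, colorable e k -> m < k) -> m < chi e.
Proof.
move=> mT col; apply: (big_ind (fun k => m < k)) => //.
  by move=> k1 k2; rewrite leq_min => -> ->.
by move=> k; apply: col.
Qed.

Local Open Scope ring_scope.
Variables (R : realType) (eps : R).
Hypothesis eps_ge0 : 0 <= eps.

Lemma edge_val_bounds (d m : nat) x y :
  minn (deg e x) (deg e y) = d -> (maxn (deg e x) (deg e y) <= d + m)%N ->
  d%:R <= edge_val e eps x y <= d%:R + eps * m%:R.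
Proof.
rewrite /edge_val => min_d max_le.
have max_ge : (d <= maxn (deg e x) (deg e y))%N.
  by rewrite -min_d (leq_trans (geq_minl _ _) (leq_maxl _ _)).
rewrite min_d.
move: max_le max_ge; set M := maxn _ _ => max_le max_ge.
have dM : d%:R <= M%:R :> R by rewrite ler_nat.
have Mdm : M%:R <= d%:R + m%:R :> R by rewrite -natrD ler_nat.
have : eps * d%:R <= eps * M%:R by rewrite ler_wpM2l.
have : eps * M%:R <= eps * d%:R + eps * m%:R by rewrite -mulrDr ler_wpM2l.
move=> ? ?; apply/andP; split; lra.
Qed.

Lemma Delta_eps_eq (k : nat) x0 y0 : e x0 y0 ->
  (forall x y, e x y -> k%:R <= edge_val e eps x y < k%:R + 1) ->
  Delta_eps e eps = k.
Proof.
move=> e0 val_bounds; apply/eqP; rewrite floor_eq intrD -pmulrn /=.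
have max_lt : forall (I : finType) (P : pred I) (F : I -> R),
    (forall i, P i -> F i < k%:R + 1) -> \big[Num.max/0]_(i | P i) F i < k%:R + 1.
  move=> I P F FP; apply: (big_ind (fun v => v < k%:R + 1)) => //.
  - by have := ler0n R k; lra.
  - by move=> a b; rewrite gt_max => -> ->.
apply/andP; split.
  apply: le_trans (le_bigmax _ _ x0).
  apply: le_trans (le_bigmax_cond _ _ e0).
  by case/andP: (val_bounds _ _ e0).
apply: (max_lt) => x _; apply: (max_lt) => y xy.
by case/andP: (val_bounds _ _ xy).
Qed.

End GraphParameters.

Section Witness.
Variable n : nat.

Definition vertex := (bool + ('I_n.+1 + 'I_n.+2))%type.

Local Notation hub b := (inl b).
Local Notation kv i := (inr (inl i)).
Local Notation av i := (inr (inr i)).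

Definition hub_cut := uphalf n.+1.
Arguments hub_cut : simpl never.
Local Notation c := hub_cut.

Lemma hub_cut_spec : 0 < c /\ (n.+1)./2 <= c /\ c + (n.+1)./2 = n.+1.
Proof. by rewrite /hub_cut uphalf_half; have := odd_double_half n.+1; lia. Qed.

Definition adj (x y : vertex) : bool :=
  match x, y with
  | hub _, kv _ | kv _, hub _ => true
  | hub b, av i | av i, hub b => (i < c) == b
  | kv i, kv j | av i, av j => i != j
  | _, _ => false
  end.

Lemma adj_sym : symmetric adj.
Proof. by move=> [x|[x|x]] [y|[y|y]] //=; rewrite eq_sym. Qed.

Lemma adj_irr : irreflexive adj.
Proof. by move=> [x|[x|x]] //=; rewrite eqxx. Qed.

Lemma deg_kv i : deg adj (kv i) = n.+2.
Proof.
rewrite deg_sum1 !big_sumType /= big_mkcond big_bool /= sum_ord_neq big_pred0 //.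
by rewrite addn0.
Qed.

Lemma deg_av i : deg adj (av i) = n.+2.
Proof.
rewrite deg_sum1 !big_sumType /= big_mkcond big_bool /= sum_ord_neq big_pred0 //.
by case: (i < c).
Qed.

Lemma deg_hub b : deg adj (hub b) = n.+1 + (if b then c else n.+2 - c).
Proof.
rewrite deg_sum1 !big_sumType /= big_pred0 // sum1_card card_ord add0n.
by rewrite sum_ord_cut //; have := hub_cut_spec; lia.
Qed.

Lemma deg_bounds v : n.+2 <= deg adj v <= n.+2 + (n.+1)./2.
Proof.
case: v => [b|[i|i]]; rewrite ?deg_kv ?deg_av ?deg_hub ?leqnn ?leq_addr //.
by have := hub_cut_spec; case: b; lia.
Qed.

Lemma adj_minn_deg x y : adj x y -> minn (deg adj x) (deg adj y) = n.+2.
Proof.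
move=> xy; move: xy (deg_bounds x) (deg_bounds y).
by case: x => [b|[i|i]]; case: y => [b'|[j|j]] //= _; rewrite ?deg_kv ?deg_av; lia.
Qed.

Definition cliqueA : {set vertex} := [set av i | i : 'I_n.+2].
Definition cliqueK : {set vertex} := hub false |: [set kv i | i : 'I_n.+1].

Lemma card_cliqueA : #|cliqueA| = n.+2.
Proof. by rewrite card_imset ?card_ord // => i j []. Qed.

Lemma card_cliqueK : #|cliqueK| = n.+2.
Proof.
rewrite cardsU1 card_imset ?card_ord; last by move=> i j [].
by case: imsetP => // -[].
Qed.

Lemma is_clique_A : is_clique adj cliqueA.
Proof.
by apply/is_cliqueP => _ _ /imsetP [i _ ->] /imsetP [j _ ->]; apply: contra => /eqP ->.
Qed.

Lemma is_clique_K : is_clique adj cliqueK.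
Proof.
by apply/is_cliqueP => x y /setU1P [-> | /imsetP [i _ ->]] /setU1P [-> | /imsetP [j _ ->]].
Qed.

(* A proper k-coloring with k <= n+2 uses every color on both cliques.  The
   vertex of A colored like hub false is adjacent to hub true, so the color of
   hub true differs from that of hub false and must occur on K: a conflict. *)
Lemma not_colorable_adj k : k <= n.+2 -> ~~ colorable adj k.
Proof.
move=> kn; apply/negP => /colorable_proper [f proper_f].
have [_ /imsetP [i _ ->] fi] := coloring_onto_clique proper_f is_clique_A
  (leq_trans kn (eq_leq (esym card_cliqueA))) (f (hub false)).
have i_lt : i < c.
  by move: (proper_f (av i) (hub false)); rewrite /= fi eqxx; case: (i < c) => // /(_ isT).
have f_hubs : f (hub true) != f (hub false).
  by rewrite -fi; apply: proper_f; rewrite /= i_lt.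
have [_ /setU1P [-> | /imsetP [j _ ->]] fj] := coloring_onto_clique proper_f
  is_clique_K (leq_trans kn (eq_leq (esym card_cliqueK))) (f (hub true)).
  by rewrite fj eqxx in f_hubs.
by have := proper_f (hub true) (kv j) isT; rewrite fj eqxx.
Qed.

Lemma chi_adj_gt : n.+2 < chi adj.
Proof.
apply: chi_gt => [|k]; first by rewrite !card_sum card_bool !card_ord; lia.
by apply: contraTT; rewrite -leqNgt; apply: not_colorable_adj.
Qed.

(* Each clique misses one of the two hubs; these rankings into 'I_(n+2) are
   proper colorings once hub true, respectively hub false, is removed. *)
Definition rank_hub_first (x : vertex) : 'I_n.+2 :=
  match x with hub _ => ord0 | kv i => lift ord0 i | av i => i end.

Definition rank_hub_last (x : vertex) : 'I_n.+2 :=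
  match x with hub _ => ord_max | kv i => widen_ord (leqnSn _) i | av i => i end.

Lemma rank_hub_first_proper x y : x != hub true -> y != hub true ->
  adj x y -> rank_hub_first x != rank_hub_first y.
Proof.
have [c0 _] := hub_cut_spec.
case: x => [[]|[i|i]] // _; case: y => [[]|[j|j]] //= _; rewrite -val_eqE /=.
all: by rewrite eqbF_neg -leqNgt; lia.
Qed.

Lemma rank_hub_last_proper x y : x != hub false -> y != hub false ->
  adj x y -> rank_hub_last x != rank_hub_last y.
Proof.
have [_ [_ c_le]] := hub_cut_spec.
case: x => [[]|[i|i]] // _; case: y => [[]|[j|j]] //= _; rewrite -val_eqE /=.
all: rewrite ?eqb_id; by [have := ltn_ord i; lia | have := ltn_ord j; lia | lia].
Qed.

Lemma omega_adj_le : omega adj <= n.+2.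
Proof.
apply/bigmax_leqP => A clA; have /is_cliqueP adjA := clA.
have hubs_nadj : ~~ adj (hub false) (hub true) by [].
case: (boolP (hub false \in A)) => [fA | fNA].
- have tNA : hub true \notin A.
    by apply: contra hubs_nadj => tA; apply: adjA.
  apply: (card_clique_le (f := rank_hub_first) clA) => x y xA yA.
  by apply: rank_hub_first_proper; apply: contraNneq tNA => <-.
- apply: (card_clique_le (f := rank_hub_last) clA) => x y xA yA.
  by apply: rank_hub_last_proper; apply: contraNneq fNA => <-.
Qed.

Local Open Scope ring_scope.

Lemma Delta_eps_adj (R : realType) (eps : R) : 0 <= eps ->
  eps * ((n.+1)./2)%:R < 1 -> Delta_eps adj eps = n.+2.
Proof.
move=> eps_ge0 eps_small.
apply: (Delta_eps_eq (_ : adj (av ord0) (av ord_max))) => // x y xy.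
have max_le : (maxn (deg adj x) (deg adj y) <= n.+2 + (n.+1)./2)%N.
  by have := deg_bounds x; have := deg_bounds y; lia.
have /andP [lo hi] := edge_val_bounds eps_ge0 (adj_minn_deg xy) max_le.
by rewrite lo /=; lra.
Qed.

End Witness.

Local Open Scope ring_scope.

Lemma exists_witness_index (R : realType) (eps : R) (t : int) :
  0 < eps -> eps <= 1 -> t%:~R < 1 + 2 / eps ->
  exists2 n : nat, t <= n.+2 & (n.+1)%:R < 2 / eps.
Proof.
move=> eps_gt0 eps_le1 t_lt.
have two_le : 2 <= 2 / eps by rewrite ler_pdivlMr //; lra.
case: (lerP t 2) => [t_le2 | t_gt2].
  by exists 0%N => //; apply: lt_le_trans two_le; rewrite ltr_nat.
have [n t_eq] : exists n : nat, t = n.+2%:Z.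
  by move: t_gt2 {t_lt}; case: t => // m m2; exists (m - 2)%N; congr Posz; lia.
exists n; first by rewrite t_eq.
by move: t_lt; rewrite t_eq -pmulrn -[n.+2]addn1 natrD; lra.
Qed.

Lemma eps_half_lt1 (R : realType) (eps : R) (n : nat) :
  0 < eps -> (n.+1)%:R < 2 / eps -> eps * ((n.+1)./2)%:R < 1.
Proof.
move=> eps_gt0 n_lt.
have half_le : ((n.+1)./2)%:R * 2 <= (n.+1)%:R :> R.
  by rewrite -natrM ler_nat muln2 -{2}(odd_double_half n.+1) leq_addl.
have : eps * (n.+1)%:R < 2 by rewrite mulrC -ltr_pdivlMr.
have : eps * (((n.+1)./2)%:R * 2) <= eps * (n.+1)%:R by rewrite ler_wpM2l // ltW.
lra.
Qed.

Theorem mainTheorem6 (R : realType) (eps : R) (t : int) :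
  0 < eps -> eps <= 1 ->
  (forall (T : finType) (e : rel T), symmetric e -> irreflexive e ->
     t <= Delta_eps e eps ->
     ((chi e)%:Z <= Num.max (omega e)%:Z (Delta_eps e eps))) ->
  1 + 2 / eps <= t%:~R.
Proof.
move=> eps_gt0 eps_le1 chi_bound; rewrite leNgt; apply/negP => t_lt.
have [n t_le n_lt] := exists_witness_index eps_gt0 eps_le1 t_lt.
have Delta_n := Delta_eps_adj (ltW eps_gt0) (eps_half_lt1 eps_gt0 n_lt).
move: (chi_bound _ _ (@adj_sym n) (@adj_irr n)); rewrite Delta_n => /(_ t_le).
by rewrite (max_idPr _) ?lez_nat ?omega_adj_le // leqNgt chi_adj_gt.
Qed.
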